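(* The matrix $$U_7=S_1\otimes S_2\otimes S_0+S_2\otimes S_3\otimes S_0+S_0\otimes S_0\otimes S_1+S_3\otimes S_1\otimes S_1+S_1\otimes S_1\otimes S_2+S_2\otimes S_0\otimes S_2+S_0\otimes S_3\otimes S_3+S_3\otimes S_2\otimes S_3$$ on $\mathbb{C}^2\otimes\mathbb{C}^2\otimes\mathbb{C}^2$ is unitary and $\mathrm{sr}(U_7)=7$.
   Context: $S_0=\begin{bmatrix}1&0\\0&0\end{bmatrix}$, $S_1=\begin{bmatrix}0&1\\0&0\end{bmatrix}$, $S_2=\begin{bmatrix}0&0\\1&0\end{bmatrix}$, $S_3=\begin{bmatrix}0&0\\0&1\end{bmatrix}$. For a matrix $U$ on $\mathbb{C}^2\otimes\mathbb{C}^2\otimes\mathbb{C}^2$ (systems $A,B,C$), its Schmidt rank $\mathrm{sr}(U)$ is the least integer $r$ such that $U=\sum_{j=1}^r A_j\otimes B_j\otimes C_j$ with $A_j,B_j,C_j$ complex $2\times 2$ matrices (i.e. the tensor rank of $U$). *)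

From HB Require Import structures.
From mathcomp Require Import all_boot all_order all_algebra.
From mathcomp Require Import mxtens.
Set Implicit Arguments. Unset Strict Implicit. Unset Printing Implicit Defensive.
Import Order.TTheory GRing.Theory Num.Theory.
Local Open Scope ring_scope.

(* The complex numbers are modelled by an arbitrary numClosedFieldType C
   (algebraically closed field of char 0 with conjugation); this includes
   algC and complex R for any real closed field R (e.g. the real numbers). *)

Section Defs.
Variable C : numClosedFieldType.

Definition S0 : 'M[C]_2 := delta_mx 0 0.
Definition S1 : 'M[C]_2 := delta_mx 0 1.
Definition S2 : 'M[C]_2 := delta_mx 1 0.
Definition S3 : 'M[C]_2 := delta_mx 1 1.

Definition tens3 (A B Cm : 'M[C]_2) : 'M[C]_(2 * 2 * 2) := (A *t B) *t Cm.

Definition adjmx n (M : 'M[C]_n) : 'M[C]_n := (map_mx Num.conj M)^T.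

Definition unitary_mx n (M : 'M[C]_n) : Prop :=
  M *m adjmx M = 1%:M /\ adjmx M *m M = 1%:M.

Definition sr_le (U : 'M[C]_(2 * 2 * 2)) (r : nat) : Prop :=
  exists (A B Cm : 'I_r -> 'M[C]_2), U = \sum_(j < r) tens3 (A j) (B j) (Cm j).

Definition is_schmidt_rank (U : 'M[C]_(2 * 2 * 2)) (r : nat) : Prop :=
  sr_le U r /\ forall r', sr_le U r' -> (r <= r')%N.

Definition U7 : 'M[C]_(2 * 2 * 2) :=
  tens3 S1 S2 S0 + tens3 S2 S3 S0 + tens3 S0 S0 S1 + tens3 S3 S1 S1
  + tens3 S1 S1 S2 + tens3 S2 S0 S2 + tens3 S0 S3 S3 + tens3 S3 S2 S3.

End Defs.

From HB Require Import structures.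
From mathcomp Require Import all_boot all_order all_algebra ring.
From mathcomp Require Import mxtens.
Set Implicit Arguments. Unset Strict Implicit. Unset Printing Implicit Defensive.
Import Order.TTheory GRing.Theory Num.Theory.
Local Open Scope ring_scope.

(* Unitarity: U7 is a permutation matrix (it sends e_p to e_(f7 p)).

   Rank: contracting the B and C factors of U7 against matrices derived from
   Y and X yields the product X Y, up to fixed relabellings of matrix entries
   (U7_mul).  So U7 is the structure tensor of 2x2 matrix multiplication, and
   - an explicit Strassen-type decomposition gives sr(U7) <= 7;
   - a decomposition with 6 terms would give a bilinear algorithm
       X Y = sum_(j<6) <c_j, X> <b_j, Y> a_j
     which Winograd's argument rules out: after normalising c_0 to vanish on a
     pencil Q <1, E01> R (rank normal form), substituting X = Q R and
     X = Q E01 R shows that three of the a_j span all 2x2 matrices. *)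

(* Names of the two indices as they appear after unfolding a sum over 'I_2. *)
Lemma ord2_bigE : (lift ord0 (ord0 : 'I_1) = 1 :> 'I_2) * (ord0 = 0 :> 'I_2).
Proof. by split; apply: val_inj. Qed.

Section TwoByTwo.
Variable R : comPzRingType.

Definition mk2 (a b c d : R) : 'M[R]_2 :=
  \matrix_(i < 2, j < 2) if i == 0 then (if j == 0 then a else b)
                         else (if j == 0 then c else d).

Lemma ord2P (i : 'I_2) : i = 0 \/ i = 1.
Proof. by case: i => [[|[|//]] Hi]; [left|right]; apply: val_inj. Qed.

Lemma mk2E (a b c d : R) :
  (mk2 a b c d 0 0 = a) * (mk2 a b c d 0 1 = b) *
  (mk2 a b c d 1 0 = c) * (mk2 a b c d 1 1 = d).
Proof. by rewrite !mxE. Qed.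

Lemma mx2_eta (A : 'M[R]_2) : A = mk2 (A 0 0) (A 0 1) (A 1 0) (A 1 1).
Proof. by apply/matrixP => i j; rewrite mxE; case: (ord2P i) (ord2P j) => -> [] ->. Qed.

Lemma mk2_eq0 (a b c d : R) : (mk2 a b c d == 0) = [&& a == 0, b == 0, c == 0 & d == 0].
Proof.
apply/eqP/and4P => [E|[/eqP-> /eqP-> /eqP-> /eqP->]].
  move: (congr1 (fun M : 'M[R]_2 => (M 0 0, M 0 1, M 1 0, M 1 1)) E).
  by rewrite !mxE /= => -[-> -> -> ->]; rewrite eqxx.
by apply/matrixP => i j; rewrite !mxE; case: (ord2P i) (ord2P j) => -> [] ->.
Qed.

Lemma add2 (a b c d a' b' c' d' : R) :
  mk2 a b c d + mk2 a' b' c' d' = mk2 (a + a') (b + b') (c + c') (d + d').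
Proof. by apply/matrixP => i j; rewrite !mxE; case: (ord2P i) (ord2P j) => -> [] ->. Qed.

Lemma scale2 (k a b c d : R) : k *: mk2 a b c d = mk2 (k * a) (k * b) (k * c) (k * d).
Proof. by apply/matrixP => i j; rewrite !mxE; case: (ord2P i) (ord2P j) => -> [] ->. Qed.

Lemma mul2 (a b c d a' b' c' d' : R) :
  mk2 a b c d *m mk2 a' b' c' d' =
  mk2 (a * a' + b * c') (a * b' + b * d') (c * a' + d * c') (c * b' + d * d').
Proof.
apply/matrixP => i j; rewrite !mxE !big_ord_recl big_ord0 !ord2_bigE.
by rewrite !mxE; case: (ord2P i) (ord2P j) => -> [] -> /=; rewrite addr0.
Qed.

Lemma delta2 :
  (delta_mx 0 0 = mk2 1 0 0 0) * (delta_mx 0 1 = mk2 0 1 0 0) *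
  (delta_mx 1 0 = mk2 0 0 1 0) * (delta_mx 1 1 = mk2 0 0 0 1).
Proof.
by do !split; apply/matrixP => p q; rewrite !mxE; case: (ord2P p) (ord2P q) => -> [] ->.
Qed.

Lemma scalar2 (k : R) : k%:M = mk2 k 0 0 k.
Proof.
by apply/matrixP => i j; rewrite !mxE; case: (ord2P i) (ord2P j) => -> [] ->.
Qed.

Lemma pid2 (r : nat) : pid_mx r = mk2 (0 < r)%N%:R 0 0 (1 < r)%N%:R.
Proof.
by apply/matrixP => i j; rewrite !mxE; case: (ord2P i) (ord2P j) => -> [] ->.
Qed.

Lemma mxtrace2 (a b c d : R) : \tr (mk2 a b c d) = a + d.
Proof.
by rewrite /mxtrace !big_ord_recl big_ord0 !mxE /= addr0.
Qed.

(* The nondegenerate bilinear pairing <G, X> = tr (G^T X) = sum_ij G_ij X_ij;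
   every linear form on 2x2 matrices is of the form <G, _>. *)
Definition dot (G X : 'M[R]_2) : R := \tr (G^T *m X).

Lemma dotE (G X : 'M[R]_2) :
  dot G X = G 0 0 * X 0 0 + G 0 1 * X 0 1 + G 1 0 * X 1 0 + G 1 1 * X 1 1.
Proof.
rewrite /dot /mxtrace !big_ord_recl !big_ord0 !mxE !big_ord_recl !big_ord0 !mxE.
by rewrite !ord2_bigE; ring.
Qed.

Lemma dot_mulmx (G P X : 'M[R]_2) : dot G (P *m X) = dot (P^T *m G) X.
Proof. by rewrite /dot trmx_mul trmxK mulmxA. Qed.

End TwoByTwo.

Section SpanOff.
Variables (F : fieldType) (I : finType) (m n : nat) (a : I -> 'M[F]_(m, n)).

Definition span_off (S : {set I}) := (\sum_(j in ~: S) <<mxvec (a j)>>)%MS.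

Lemma rank_span_off (S : {set I}) : (\rank (span_off S) <= #|~: S|)%N.
Proof.
rewrite /span_off -sum1_card.
elim/big_rec2: _ => [|j k V _ IH]; first by rewrite mxrank0.
apply: leq_trans (mxrank_adds_leqif _ _) _.
by rewrite leq_add // mxrank_gen rank_leq_row.
Qed.

Lemma comb_span_off (S : {set I}) (w : I -> F) :
  (forall j, j \in S -> w j = 0) -> (mxvec (\sum_j w j *: a j) <= span_off S)%MS.
Proof.
move=> wS; rewrite linear_sum; apply: summx_sub => j _; rewrite linearZ /=.
have [jS|jS] := boolP (j \in S); first by rewrite wS // scale0r sub0mx.
by apply: scalemx_sub; rewrite (sumsmx_sup j) ?inE // genmxE.
Qed.

Lemma span_off_full (S : {set I}) :
  (forall i j, mxvec (delta_mx i j) <= span_off S)%MS -> (m * n <= #|~: S|)%N.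
Proof.
move=> units; have full : (1%:M <= span_off S)%MS.
  apply/row_subP => k; rewrite row1.
  by case: (mxvec_indexP k) => i j; rewrite -mxvec_delta.
by move/mxrankS: full; rewrite mxrank1 => /leq_trans; apply; apply: rank_span_off.
Qed.

End SpanOff.

Lemma nonzero_coef (R : pzRingType) (V : lmodType R) (I : finType) (f : I -> R) (a : I -> V) (M : V) :
  M != 0 -> M = \sum_j f j *: a j -> exists j, f j != 0.
Proof.
move=> M0 Msum; have [j fj|f0] := pickP (fun j => f j != 0); first by exists j.
by move: M0; rewrite Msum big1 ?eqxx // => j _; move/negbFE/eqP: (f0 j) => ->; rewrite scale0r.
Qed.

Section Winograd.
Variable F : fieldType.
Local Notation E01 := (mk2 (0 : F) 1 0 0).

(* Two forms whose restrictions to the top row are independent can be killed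
   simultaneously while prescribing the bottom row arbitrarily (Cramer's rule). *)
Lemma lift_bottom_row (g h : 'M[F]_2) (u v : F) :
  g 0 0 * h 0 1 - g 0 1 * h 0 0 != 0 ->
  exists x y, dot g (mk2 x y u v) = 0 /\ dot h (mk2 x y u v) = 0.
Proof.
move=> den0; set den := _ - _ in den0.
pose p := - (g 1 0 * u + g 1 1 * v); pose q := - (h 1 0 * u + h 1 1 * v).
exists ((p * h 0 1 - g 0 1 * q) / den), ((g 0 0 * q - p * h 0 0) / den).
by rewrite !dotE !mk2E /p /q /den; split; field.
Qed.

Lemma independent_top_rows (I : finType) (al : I -> F) (a b : I -> 'M[F]_2) :
  (forall Y, Y = \sum_j (al j * dot (b j) Y) *: a j) ->
  exists j1 j2, [/\ al j1 != 0, al j2 != 0 &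
                    b j1 0 0 * b j2 0 1 - b j1 0 1 * b j2 0 0 != 0].
Proof.
move=> id_sum.
have E01_neq0 : E01 != 0 by rewrite mk2_eq0 oner_eq0 !andbF.
have [j1] := nonzero_coef E01_neq0 (id_sum E01).
rewrite mulf_eq0 negb_or dotE !mk2E !mulr0 !mulr1 !addr0 add0r => /andP[al1 b1].
pose d := mk2 (b j1 0 1) (- b j1 0 0) 0 0.
have d_neq0 : d != 0 by rewrite mk2_eq0 negb_and b1.
have [j2] := nonzero_coef d_neq0 (id_sum d).
rewrite mulf_eq0 negb_or => /andP[al2 bd]; exists j1, j2; split => //.
suff -> : b j1 0 0 * b j2 0 1 - b j1 0 1 * b j2 0 0 = - dot (b j2) d by rewrite oppr_eq0.
by rewrite dotE !mk2E; ring.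
Qed.

(* The forms b_j1, b_j2 cut out a plane W; on W both
   expansions only use the three a_j with j \notin {0, j1, j2}, yet W and
   E01 W together span all 2x2 matrices. *)
Lemma no_pencil_expansion (al be : 'I_6 -> F) (a b : 'I_6 -> 'M[F]_2) :
  al 0 = 0 -> be 0 = 0 ->
  (forall Y, Y = \sum_j (al j * dot (b j) Y) *: a j) ->
  (forall Y, E01 *m Y = \sum_j (be j * dot (b j) Y) *: a j) -> False.
Proof.
move=> al0 be0 id_sum nil_sum.
have [j1 [j2 [al1 al2 indep]]] := independent_top_rows id_sum.
pose S := 0 |: [set j1; j2].
have cardS : #|S| = 3%N.
  have j10 : j1 != 0 by apply: contraNneq al1 => ->; rewrite al0.
  have j20 : j2 != 0 by apply: contraNneq al2 => ->; rewrite al0.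
  have j12 : j1 != j2 by apply: contraNneq indep => <-; rewrite mulrC subrr.
  by rewrite cardsU1 cards2 !inE negb_or ![0 == _]eq_sym j10 j20 j12.
pose V := span_off a S.
have plane_in_V Y : dot (b j1) Y = 0 -> dot (b j2) Y = 0 ->
    (mxvec Y <= V)%MS /\ (mxvec (E01 *m Y) <= V)%MS.
  move=> h1 h2; rewrite {1}(id_sum Y) nil_sum.
  by split; apply: comb_span_off => j; rewrite !inE => /or3P[] /eqP ->;
    rewrite ?al0 ?be0 ?h1 ?h2 ?mul0r ?mulr0.
have top x y : (mxvec (mk2 x y 0 0) <= V)%MS.
  have [p [q [h1 h2]]] := lift_bottom_row x y indep.
  have [_] := plane_in_V _ h1 h2.
  suff -> : E01 *m mk2 p q x y = mk2 x y 0 0 by [].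
  by rewrite mul2; congr mk2; ring.
have bot x y : (mxvec (mk2 0 0 x y) <= V)%MS.
  have [p [q [h1 h2]]] := lift_bottom_row x y indep.
  have [inV _] := plane_in_V _ h1 h2.
  have -> : mk2 0 0 x y = mk2 p q x y + mk2 (- p) (- q) 0 0.
    by rewrite add2; congr mk2; ring.
  by rewrite linearD /= addmx_sub ?top.
have units i j : (mxvec (delta_mx i j) <= V)%MS.
  by case: (ord2P i) (ord2P j) => -> [] ->; rewrite !delta2.
have := cardsC S; rewrite card_ord cardS => total.
by move: (span_off_full units); rewrite -(leq_add2l 3) total.
Qed.

Lemma involution_unit n (S : 'M[F]_n) : S *m S = 1%:M -> S \in unitmx.
Proof. by case/mulmx1_unit. Qed.

Lemma twist_pid (r : nat) : exists S : 'M[F]_2,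
  [/\ S \in unitmx, \tr (pid_mx r *m S) = 0 & \tr (pid_mx r *m S *m E01) = 0].
Proof.
have [r1|r1] := ltnP 1 r.
  exists (mk2 1 0 0 (-1)); rewrite pid2 r1 (ltnW r1) !mul2 !mxtrace2; split; try ring.
  by apply: involution_unit; rewrite mul2 scalar2; congr mk2; ring.
exists (mk2 0 1 1 0); rewrite pid2 [(1 < r)%N]ltnNge r1 /= !mul2 !mxtrace2; split; try ring.
by apply: involution_unit; rewrite mul2 scalar2; congr mk2; ring.
Qed.

(* Any linear form on 2x2 matrices vanishes on some pencil Q <1, E01> R with
   Q, R invertible: by the rank normal form G^T = L D U, take Q = U^-1 S and
   R = L^-1, so that <G, Q Y R> = tr (D S Y). *)
Lemma normalize_form (G : 'M[F]_2) : exists Q R : 'M[F]_2,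
  [/\ Q \in unitmx, R \in unitmx, dot G (Q *m R) = 0 & dot G (Q *m E01 *m R) = 0].
Proof.
have [S [Su trS trSE]] := twist_pid (\rank G^T).
set L := col_ebase G^T; set U := row_ebase G^T; set D := pid_mx _ in trS trSE.
have key Y : dot G (invmx U *m S *m Y *m invmx L) = \tr (D *m S *m Y).
  rewrite /dot mulmxA mxtrace_mulC -{1}[G^T](mulmx_ebase G^T) -/L -/U -/D.
  by rewrite -!mulmxA mulKmx ?col_ebase_unit // mulKVmx ?row_ebase_unit.
exists (invmx U *m S), (invmx L); split.
- by rewrite unitmx_mul unitmx_inv row_ebase_unit.
- by rewrite unitmx_inv col_ebase_unit.
- by rewrite -[invmx U *m S]mulmx1 key mulmx1.
- by rewrite key.
Qed.

(* Normalise the form c_0 to vanish on Q <1, E01> R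
   and substitute X = Q R, resp. X = Q E01 R, to reach no_pencil_expansion. *)
Lemma no_bilinear_algorithm6 (a b c : 'I_6 -> 'M[F]_2) :
  ~ (forall X Y, X *m Y = \sum_j (dot (c j) X * dot (b j) Y) *: a j).
Proof.
move=> alg; have [Q [R [Qu Ru c1 cE]]] := normalize_form (c 0).
pose a' j := invmx Q *m a j; pose b' j := (invmx R)^T *m b j.
have expand P Y : P *m Y = \sum_j (dot (c j) (Q *m P *m R) * dot (b' j) Y) *: a' j.
  have -> : P *m Y = invmx Q *m (Q *m P *m R *m (invmx R *m Y)).
    by rewrite -!mulmxA mulKVmx // mulKmx.
  rewrite (alg (Q *m P *m R)) mulmx_sumr; apply: eq_bigr => j _.
  by rewrite -scalemxAr [dot (b j) _]dot_mulmx.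
apply: (no_pencil_expansion (al := fun j => dot (c j) (Q *m 1%:M *m R))
                            (be := fun j => dot (c j) (Q *m E01 *m R)) (a := a') (b := b') _ cE).
- by rewrite mulmx1.
- by move=> Y; rewrite -expand mul1mx.
- exact: expand.
Qed.

End Winograd.

Lemma perm_unitary (C : numClosedFieldType) n (M : 'M[C]_n) (f : 'I_n -> 'I_n) :
  injective f -> (forall p q, M p q = (q == f p)%:R) -> unitary_mx M.
Proof.
move=> f_inj ME; suff MM : M *m adjmx M = 1%:M by split => //; apply: mulmx1C.
apply/matrixP => p r; rewrite !mxE (bigD1 (f p)) //= big1 => [|q qfp].
  by rewrite !mxE !ME eqxx mul1r rmorph_nat (inj_eq f_inj) eq_sym addr0.
by rewrite !mxE ME (negbTE qfp) mul0r.
Qed.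

Lemma sr_le_widen (C : numClosedFieldType) (U : 'M[C]_(2 * 2 * 2)) r s :
  sr_le U r -> (r <= s)%N -> sr_le U s.
Proof.
move=> [A [B [Cm ->]]] rs.
pose ext (D : 'I_r -> 'M[C]_2) (j : 'I_s) := if insub (val j) is Some k then D k else 0.
exists (ext A), (ext B), (ext Cm).
pose T (n : nat) := if insub n is Some k then tens3 (A k) (B k) (Cm k) else 0.
rewrite (eq_bigr (T \o val)) => [|j _]; last by rewrite /T /= valK.
rewrite (big_ord_widen s T rs) big_mkcond; apply: eq_bigr => j _.
rewrite /T /ext; case: insubP => [k -> _ //|/negbTE ->].
by rewrite /tens3 !tens0mx.
Qed.

Section U7Tensor.
Variable C : numClosedFieldType.

Definition idx3 (i1 i2 i3 : 'I_2) : 'I_(2 * 2 * 2) := mxtens_index (mxtens_index (i1, i2), i3).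

Lemma tens3E (A B Cm : 'M[C]_2) i1 i2 i3 k1 k2 k3 :
  tens3 A B Cm (idx3 i1 i2 i3) (idx3 k1 k2 k3) = A i1 k1 * B i2 k2 * Cm i3 k3.
Proof. by rewrite /tens3 /idx3 !tensmxE. Qed.

Definition contract (M : 'M[C]_(2 * 2 * 2)) (P2 P3 : 'M[C]_2) : 'M[C]_2 :=
  \matrix_(i, k) \sum_(i2 < 2) \sum_(k2 < 2) \sum_(i3 < 2) \sum_(k3 < 2)
     M (idx3 i i2 i3) (idx3 k k2 k3) * (P2 i2 k2 * P3 i3 k3).

Lemma contractD (M N : 'M[C]_(2 * 2 * 2)) P2 P3 :
  contract (M + N) P2 P3 = contract M P2 P3 + contract N P2 P3.
Proof.
apply/matrixP => i k; rewrite !mxE -big_split; apply: eq_bigr => i2 _.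
rewrite -big_split; apply: eq_bigr => k2 _; rewrite -big_split; apply: eq_bigr => i3 _.
by rewrite -big_split; apply: eq_bigr => k3 _; rewrite mxE mulrDl.
Qed.

Lemma contract_sum n (M : 'I_n -> 'M[C]_(2 * 2 * 2)) P2 P3 :
  contract (\sum_(j < n) M j) P2 P3 = \sum_(j < n) contract (M j) P2 P3.
Proof.
apply: (big_morph (fun T => contract T P2 P3)) => [T T'|]; first exact: contractD.
apply/matrixP => i k; rewrite !mxE big1 // => i2 _; rewrite big1 // => k2 _.
by rewrite big1 // => i3 _; rewrite big1 // => k3 _; rewrite mxE mul0r.
Qed.

Lemma contract_tens (A B Cm P2 P3 : 'M[C]_2) :
  contract (tens3 A B Cm) P2 P3 = (dot B P2 * dot Cm P3) *: A.
Proof.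
apply/matrixP => i k; rewrite !mxE.
under eq_bigr => i2 _ do under eq_bigr => k2 _ do under eq_bigr => i3 _ do
  under eq_bigr => k3 _ do rewrite tens3E.
by rewrite !big_ord_recl !big_ord0 !dotE !ord2_bigE; ring.
Qed.

(* U7 is the structure tensor of 2x2 matrix multiplication, up to relabelling
   the entries of each factor: swap22 exchanges the entries (1,0), (1,1),
   swap12 the entries (0,1), (1,1), and cyc3 cycles three entries. *)
Definition swap22 (Y : 'M[C]_2) := mk2 (Y 0 0) (Y 0 1) (Y 1 1) (Y 1 0).
Definition swap12 (Y : 'M[C]_2) := mk2 (Y 0 0) (Y 1 1) (Y 1 0) (Y 0 1).
Definition cyc3 (X : 'M[C]_2) := mk2 (X 1 1) (X 0 0) (X 1 0) (X 0 1).
Definition cyc3_adj (G : 'M[C]_2) := mk2 (G 0 1) (G 1 1) (G 1 0) (G 0 0).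

Lemma dot_swap22 (G Y : 'M[C]_2) : dot G (swap22 Y) = dot (swap22 G) Y.
Proof. by rewrite !dotE !mk2E; ring. Qed.

Lemma dot_cyc3 (G X : 'M[C]_2) : dot G (cyc3 X) = dot (cyc3_adj G) X.
Proof. by rewrite !dotE !mk2E; ring. Qed.

Lemma swap12_sum n (w : 'I_n -> C) (A : 'I_n -> 'M[C]_2) :
  swap12 (\sum_j w j *: A j) = \sum_j w j *: swap12 (A j).
Proof.
apply/matrixP => p q; rewrite summxE {1}/swap12 mxE.
by case: (ord2P p) (ord2P q) => -> [] -> /=; rewrite summxE; apply: eq_bigr => j _;
  rewrite !mxE /swap12 ?mxE.
Qed.

Lemma U7_mul (X Y : 'M[C]_2) :
  X *m Y = swap12 (contract (U7 C) (swap22 Y) (cyc3 X)).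
Proof.
rewrite /U7 !contractD !contract_tens /S0 /S1 /S2 /S3 !delta2 !dotE !scale2 !add2.
by rewrite /swap12 /swap22 /cyc3 !mk2E [X]mx2_eta [Y]mx2_eta mul2 !mk2E; congr mk2; ring.
Qed.

(* Hence a decomposition of U7 into 6 product tensors would be a bilinear
   algorithm for 2x2 matrix multiplication with 6 multiplications. *)
Lemma U7_not_sr_le6 : ~ sr_le (U7 C) 6.
Proof.
move=> [A [B [Cm decomp]]].
apply: (@no_bilinear_algorithm6 C (fun j => swap12 (A j)) (fun j => swap22 (B j))
                                  (fun j => cyc3_adj (Cm j))) => X Y.
rewrite U7_mul decomp contract_sum -swap12_sum; congr swap12; apply: eq_bigr => j _.
by rewrite contract_tens dot_swap22 dot_cyc3 mulrC.
Qed.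

Lemma idx3P (p : 'I_(2 * 2 * 2)) : exists i1 i2 i3, p = idx3 i1 i2 i3.
Proof.
case: (mxtens_indexP p) => i12 i3; case: (mxtens_indexP i12) => i1 i2.
by exists i1, i2, i3.
Qed.

(* Entries of a sum, without unfolding the summands. *)
Lemma addmxE m n (A B : 'M[C]_(m, n)) i j : (A + B) i j = A i j + B i j.
Proof. by rewrite mxE. Qed.

Lemma U7E i1 i2 i3 k1 k2 k3 :
  U7 C (idx3 i1 i2 i3) (idx3 k1 k2 k3) =
  mk2 0 1 0 0 i1 k1 * mk2 0 0 1 0 i2 k2 * mk2 1 0 0 0 i3 k3 +
  mk2 0 0 1 0 i1 k1 * mk2 0 0 0 1 i2 k2 * mk2 1 0 0 0 i3 k3 +
  mk2 1 0 0 0 i1 k1 * mk2 1 0 0 0 i2 k2 * mk2 0 1 0 0 i3 k3 +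
  mk2 0 0 0 1 i1 k1 * mk2 0 1 0 0 i2 k2 * mk2 0 1 0 0 i3 k3 +
  mk2 0 1 0 0 i1 k1 * mk2 0 1 0 0 i2 k2 * mk2 0 0 1 0 i3 k3 +
  mk2 0 0 1 0 i1 k1 * mk2 1 0 0 0 i2 k2 * mk2 0 0 1 0 i3 k3 +
  mk2 1 0 0 0 i1 k1 * mk2 0 0 0 1 i2 k2 * mk2 0 0 0 1 i3 k3 +
  mk2 0 0 0 1 i1 k1 * mk2 0 0 1 0 i2 k2 * mk2 0 0 0 1 i3 k3.
Proof. by rewrite /U7 !addmxE !tens3E /S0 /S1 /S2 /S3 !delta2. Qed.

(* A Strassen-type decomposition of U7 into 7 product tensors. *)
Definition dec7 : seq ('M[C]_2 * 'M[C]_2 * 'M[C]_2) :=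
  [:: (mk2 1 1 0 0, mk2 1 0 1 0, mk2 1 1 0 0);
      (mk2 0 (-1) 1 0, mk2 1 0 0 0, mk2 1 0 1 0);
      (mk2 0 1 0 1, mk2 0 1 (-1) 0, mk2 0 1 0 0);
      (mk2 1 0 1 0, mk2 (-1) 0 0 1, mk2 1 0 0 0);
      (mk2 (-1) 0 0 1, mk2 0 0 1 0, mk2 0 1 0 1);
      (mk2 0 1 0 0, mk2 1 1 0 0, mk2 0 (-1) 1 0);
      (mk2 1 0 0 0, mk2 0 0 1 1, mk2 (-1) 0 0 1)].

Lemma U7_sr_le7 : sr_le (U7 C) 7.
Proof.
pose t j := nth (0, 0, 0) dec7 j.
exists (fun j => (t j).1.1), (fun j => (t j).1.2), (fun j => (t j).2).
apply/matrixP => p q.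
have [i1 [i2 [i3 ->]]] := idx3P p; have [k1 [k2 [k3 ->]]] := idx3P q.
rewrite U7E summxE !big_ord_recl big_ord0 !tens3E /=.
case: (ord2P i1) => ->; case: (ord2P i2) => ->; case: (ord2P i3) => ->;
case: (ord2P k1) => ->; case: (ord2P k2) => ->; case: (ord2P k3) => ->; rewrite !mk2E; ring.
Qed.

(* U7 maps the basis vector e_p to e_(f7 p): it is a permutation matrix. *)
Definition f7 (p : 'I_(2 * 2 * 2)) : 'I_(2 * 2 * 2) :=
  inord (nth 0%N [:: 1; 6; 4; 3; 7; 0; 2; 5]%N p).

Lemma f7_inj : injective f7.
Proof.
have lt8 n : (nth 0 [:: 1; 6; 4; 3; 7; 0; 2; 5] n < 8)%N.
  by do 8?[case: n => [|n] //]; rewrite /= nth_nil.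
move=> p r /(congr1 (@nat_of_ord _)); rewrite /f7 !inordK ?lt8 //.
case: p => [[|[|[|[|[|[|[|[|//]]]]]]]] Hp]; case: r => [[|[|[|[|[|[|[|[|//]]]]]]]] Hr] /= H;
  apply: val_inj => //=; discriminate H.
Qed.

Lemma U7_perm p q : U7 C p q = (q == f7 p)%:R.
Proof.
have [i1 [i2 [i3 ->]]] := idx3P p; have [k1 [k2 [k3 ->]]] := idx3P q.
rewrite U7E.
case: (ord2P i1) => ->; case: (ord2P i2) => ->; case: (ord2P i3) => ->;
case: (ord2P k1) => ->; case: (ord2P k2) => ->; case: (ord2P k3) => ->;
rewrite !mk2E ?(mulr0, mul0r, mulr1, mul1r, addr0, add0r).
all: by rewrite -[_ == _]/(nat_of_ord _ == nat_of_ord _) /idx3 /f7 /= ?inordK.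
Qed.

End U7Tensor.

Theorem mainTheorem6 (C : numClosedFieldType) :
  unitary_mx (U7 C) /\ is_schmidt_rank (U7 C) 7.
Proof.
split; first exact: perm_unitary f7_inj (@U7_perm C).
split; first exact: U7_sr_le7.
move=> r dec; rewrite leqNgt; apply/negP => r_lt7.
exact: U7_not_sr_le6 (sr_le_widen dec r_lt7).
Qed.
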